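(* Let $q$ be a prime power and let $C_2\subsetneq C_1\subseteq\mathbf{F}_q^n$ be $\mathbf{F}_q$-linear codes with $\dim C_1-\dim C_2=L$. Fix an $\mathbf{F}_q$-linear isomorphism $f:\mathbf{F}_q^L\to C_1/C_2$ (so each $f(\vec{s})$ is a coset of $C_2$ in $C_1$, viewed as a subset of $C_1$). Consider the quantum ramp secret sharing scheme which encodes each basis state $|\vec{s}\rangle\in\bigotimes_{i=1}^L\mathcal{G}_i$, $\vec{s}\in\mathbf{F}_q^L$, to \[ \frac{1}{\sqrt{|C_2|}}\sum_{\vec{x}\in f(\vec{s})}|\vec{x}\rangle\in\bigotimes_{j=1}^n\mathcal{H}_j, \] extended complex-linearly, with $\mathcal{H}_j$ being the $j$-th share. Let $I\subseteq\{1,\ldots,L\}$, $\overline{I}=\{1,\ldots,L\}\setminus I$, $J\subseteq\{1,\ldots,n\}$, $\overline{J}=\{1,\ldots,n\}\setminus J$, and define the codes in $\mathbf{F}_q^{n+|\overline{I}|}$ \[ C'_1=\{(\vec{x},P_{\overline{I}}(\vec{s})) : \vec{s}\in\mathbf{F}_q^L,\ \vec{x}\in f(\vec{s})\},\qquad C'_2=\{(\vec{x},P_{\overline{I}}(\vec{s})) : \vec{s}\in\mathbf{F}_q^L,\ P_I(\vec{s})=\vec{0},\ \vec{x}\in f(\vec{s})\}. \] Then the scheme is strongly secure with respect to $I$ and $J$ if and only if \[ \dim P_J(C'_1)-\dim P_J(C'_2)=0 \] and \[ \dim P_{\overline{J}\cup\{n+1,\ldots,n+|\overline{I}|\}}(C'_1)-\dim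 P_{\overline{J}\cup\{n+1,\ldots,n+|\overline{I}|\}}(C'_2)=|I|. \]
   Context: All $\mathcal{G}_i$ ($i=1,\ldots,L$) and $\mathcal{H}_j$ ($j=1,\ldots,n$) are $q$-dimensional complex Hilbert spaces with orthonormal basis $\{|a\rangle : a\in\mathbf{F}_q\}$; for $\vec{x}\in\mathbf{F}_q^n$, $|\vec{x}\rangle=|x_1\rangle\otimes\cdots\otimes|x_n\rangle$. For an index set $K$ and a vector $\vec{v}$, $P_K(\vec{v})=(v_k)_{k\in K}$ is the projection (puncturing) onto the coordinates in $K$; for a code $C$, $P_K(C)=\{P_K(\vec{v}):\vec{v}\in C\}$. In $C'_1,C'_2$ the first $n$ coordinates are those of $\vec{x}$ and coordinates $n+1,\ldots,n+|\overline{I}|$ are those of $P_{\overline{I}}(\vec{s})$. For $I\subseteq\{1,\ldots,L\}$ let $\mathcal{G}_I=\bigotimes_{i\in I}\mathcal{G}_i$ and $\mathcal{G}_{\overline{I}}=\bigotimes_{i\in\overline{I}}\mathcal{G}_i$. Definition (strong security): the scheme is strongly secure with respect to $I$ and $J$ if the quantum state $\sigma_J$ of the shares in $\bigotimes_{j\in J}\mathcal{H}_j$ (the reduced state of the encoded secret) is always the same state regardless of $\rho_I$, when the whole quantum secret is in the state $\rho_I\otimes\rho_{\overline{I},\mathrm{mix}}$, where $\rho_I$ is an arbitrary state on $\mathcal{G}_I$ and $\rho_{\overline{I},\mathrm{mix}}$ is the fully mixed state on $\mathcal{G}_{\overline{I}}$. *)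

From HB Require Import structures.
From mathcomp Require Import all_boot all_order all_algebra all_field.
From mathcomp Require Import algC.
Set Implicit Arguments. Unset Strict Implicit. Unset Printing Implicit Defensive.
Import Order.TTheory GRing.Theory Num.Theory.
Local Open Scope ring_scope.

Section Defs.
Variable F : finFieldType.

(* Puncturing P_K : F^N -> F^{|K|}, coordinates of K kept in increasing order. *)
Definition projK (N : nat) (K : {set 'I_N}) (v : 'rV[F]_N) : 'rV[F]_#|K| :=
  \row_(k < #|K|) v 0 (enum_val k).

Definition projS (N : nat) (K : {set 'I_N}) (S : {set 'rV[F]_N})
  : {set 'rV[F]_#|K|} := [set projK K v | v in S].

Definition dimS (N : nat) (S : {set 'rV[F]_N}) : nat := \dim <<enum S>>%VS.

(* the F-linear isomorphism f : F^L -> C1/C2 is given by a linear lift g,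
   f s = g s + C2 *)
Definition cosetS (n L : nat) (C2 : {vspace 'rV[F]_n}) (g : 'rV[F]_L -> 'rV[F]_n)
  (s : 'rV[F]_L) : {set 'rV[F]_n} := [set x | x - g s \in C2].

Definition is_quotient_iso (n L : nat) (C1 C2 : {vspace 'rV[F]_n})
  (g : 'rV[F]_L -> 'rV[F]_n) : Prop :=
  [/\ forall (a : F) (u v : 'rV[F]_L), g (a *: u + v) = a *: g u + g v,
      forall s, g s \in C1
    & forall s, g s \in C2 -> s = 0].

Definition C1' (n L : nat) (C2 : {vspace 'rV[F]_n}) (g : 'rV[F]_L -> 'rV[F]_n)
  (I : {set 'I_L}) : {set 'rV[F]_(n + #|~: I|)} :=
  [set row_mx x (projK (~: I) s) | s in [set: 'rV[F]_L], x in cosetS C2 g s].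

Definition C2' (n L : nat) (C2 : {vspace 'rV[F]_n}) (g : 'rV[F]_L -> 'rV[F]_n)
  (I : {set 'I_L}) : {set 'rV[F]_(n + #|~: I|)} :=
  [set row_mx x (projK (~: I) s) | s in [set s : 'rV[F]_L | projK I s == 0],
                                   x in cosetS C2 g s].
End Defs.

(* Quantum part: operators on the Hilbert space with orthonormal basis
   indexed by a finite type T are matrices T -> T -> algC. *)
Definition is_state (T : finType) (rho : T -> T -> algC) : Prop :=
  (forall v : T -> algC,
     0 <= \sum_(x : T) \sum_(y : T) (v x)^* * rho x y * v y)
  /\ \sum_(x : T) rho x x = 1.

Section Quantum.
Variable F : finFieldType.

(* rho_I (x) rho_{Ibar,mix} on the secret space (basis |s>, s in F^L) *)
Definition secret_state (L : nat) (I : {set 'I_L})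
  (rhoI : 'rV[F]_#|I| -> 'rV[F]_#|I| -> algC) (s t : 'rV[F]_L) : algC :=
  rhoI (projK I s) (projK I t) *
  (if projK (~: I) s == projK (~: I) t then ((#|F|%:R) ^+ #|~: I|)^-1 else 0).

(* amplitude <x| E |s> of the encoding isometry *)
Definition enc_amp (n L : nat) (C2 : {vspace 'rV[F]_n}) (g : 'rV[F]_L -> 'rV[F]_n)
  (x : 'rV[F]_n) (s : 'rV[F]_L) : algC :=
  if x \in cosetS C2 g s
  then (sqrtC (#|[set y : 'rV[F]_n | y \in C2]|%:R))^-1 else 0.

Definition encode (n L : nat) (C2 : {vspace 'rV[F]_n}) (g : 'rV[F]_L -> 'rV[F]_n)
  (rho : 'rV[F]_L -> 'rV[F]_L -> algC) (x y : 'rV[F]_n) : algC :=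
  \sum_(s : 'rV[F]_L) \sum_(t : 'rV[F]_L)
     enc_amp C2 g x s * rho s t * (enc_amp C2 g y t)^*.

Definition ptrace (n : nat) (J : {set 'I_n}) (sigma : 'rV[F]_n -> 'rV[F]_n -> algC)
  (a b : 'rV[F]_#|J|) : algC :=
  \sum_(x : 'rV[F]_n | projK J x == a)
   \sum_(y : 'rV[F]_n | (projK J y == b) && (projK (~: J) y == projK (~: J) x))
     sigma x y.

Definition strongly_secure (n L : nat) (C2 : {vspace 'rV[F]_n})
  (g : 'rV[F]_L -> 'rV[F]_n) (I : {set 'I_L}) (J : {set 'I_n}) : Prop :=
  forall rho1 rho2 : 'rV[F]_#|I| -> 'rV[F]_#|I| -> algC,
    is_state rho1 -> is_state rho2 ->
    forall a b : 'rV[F]_#|J|,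
      ptrace (J := J) (encode C2 g (secret_state (I := I) rho1)) a b =
      ptrace (J := J) (encode C2 g (secret_state (I := I) rho2)) a b.
End Quantum.

Definition Jcoords (n m : nat) (J : {set 'I_n}) : {set 'I_(n + m)} :=
  [set lshift m j | j in J].
Definition Jbar_ext_coords (n m : nat) (J : {set 'I_n}) : {set 'I_(n + m)} :=
  [set lshift m j | j in ~: J] :|: [set rshift n k | k in [set: 'I_m]].

From HB Require Import structures.
From mathcomp Require Import all_boot all_order all_algebra all_field.
From mathcomp Require Import algC ring zify.
Import Order.TTheory GRing.Theory Num.Theory.
Set Implicit Arguments. Unset Strict Implicit. Unset Printing Implicit Defensive.
Local Open Scope ring_scope.

(* Expanding the encoding, entry (a, b) of the reduced state on the shares in J is a
   fixed nonzero multiple of sum_(u, v) rho_I(u, v) N_ab(u, v), where N_ab(u, v) counts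
   the pairs of codewords x, y with secrets s, t such that P_I s = u, P_I t = v,
   P_Ibar s = P_Ibar t, P_J x = a, P_J y = b and P_Jbar x = P_Jbar y.  This functional
   of rho_I is the same on all states iff N_ab is a constant multiple of the identity.
   Vanishing off the diagonal says that a codeword vanishing outside J whose secret
   vanishes on Ibar encodes the zero secret; a constant diagonal says that every I-part
   of a secret is carried by some codeword vanishing on J (translate by it).  Counting
   the space of pairs (secret, codeword) through kernels and images of the punctured
   codes P_J(C'_i) and P_(Jbar + {n+1..})(C'_i) turns these into the two dimension
   equalities. *)

Section Puncturing.
Variable F : finFieldType.

Lemma projK_is_linear N (K : {set 'I_N}) : linear (@projK F N K).
Proof. by move=> a u v; apply/rowP=> k; rewrite !mxE. Qed.

HB.instance Definition _ N (K : {set 'I_N}) :=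
  GRing.isLinear.Build F _ _ _ (@projK F N K) (projK_is_linear K).

Lemma projK_eqP N (K : {set 'I_N}) (v w : 'rV[F]_N) :
  projK K v = projK K w <-> {in K, forall i, v 0 i = w 0 i}.
Proof.
split=> [vw i iK | vw].
- have := congr1 (fun z : 'rV_#|K| => z 0 (enum_rank_in iK i)) vw.
  by rewrite !mxE enum_rankK_in.
- by apply/rowP=> k; rewrite !mxE vw ?enum_valP.
Qed.

Lemma projK_eq0P N (K : {set 'I_N}) (v : 'rV[F]_N) :
  projK K v = 0 <-> {in K, forall i, v 0 i = 0}.
Proof.
rewrite -(raddf0 (projK K)) projK_eqP.
by split=> vK i /vK ->; rewrite mxE.
Qed.

Lemma projK_surj N (K : {set 'I_N}) (u : 'rV[F]_#|K|) :
  exists s : 'rV[F]_N, projK K s = u.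
Proof.
exists (\row_i \sum_k (if enum_val k == i then u 0 k else 0)).
apply/rowP=> k; rewrite !mxE (bigD1 k) //= eqxx big1 ?addr0 // => k' k'k.
by rewrite (inj_eq enum_val_inj) (negbTE k'k).
Qed.

Lemma projK_setC_eq0 N (K : {set 'I_N}) (v : 'rV[F]_N) :
  projK K v = 0 -> projK (~: K) v = 0 -> v = 0.
Proof.
move=> /projK_eq0P vK /projK_eq0P vCK; apply/rowP=> i; rewrite mxE.
by case: (boolP (i \in K)) => iK; [apply: vK | apply: vCK; rewrite inE].
Qed.

Lemma projK_Jcoords_eqP m n (J : {set 'I_n}) (x x' : 'rV[F]_n) (t t' : 'rV[F]_m) :
  projK (Jcoords m J) (row_mx x t) = projK (Jcoords m J) (row_mx x' t') <->
  projK J x = projK J x'.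
Proof.
rewrite !projK_eqP; split=> xx' i.
  by move=> iJ; have := xx' (lshift _ i) (imset_f _ iJ); rewrite !row_mxEl.
by case/imsetP=> j jJ ->; rewrite !row_mxEl xx'.
Qed.

Lemma projK_Jbar_ext_coords_eq0P m n (J : {set 'I_n}) (x : 'rV[F]_n) (t : 'rV[F]_m) :
  projK (Jbar_ext_coords m J) (row_mx x t) = 0 <-> projK (~: J) x = 0 /\ t = 0.
Proof.
rewrite !projK_eq0P; split=> [xt0 | [xJ0 /rowP t0] i].
  split=> [i iJ | ]; first by rewrite -(row_mxEl x t) xt0 // inE imset_f.
  by apply/rowP=> k; rewrite mxE -(row_mxEr x t) xt0 // inE imset_f ?orbT.
by rewrite inE => /orP[] /imsetP[j jJ ->]; rewrite ?row_mxEl ?row_mxEr ?xJ0 ?t0 ?mxE.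
Qed.
End Puncturing.

Lemma card_imset_ker (U V : finZmodType) (D : {set U}) (f : {additive U -> V}) :
  GRing.zmod_closed D -> #|D| = (#|[set x in D | f x == 0%R]| * #|f @: D|)%N.
Proof.
move=> [D0 DB].
have DD u v : u \in D -> v \in D -> u + v \in D.
  by move=> uD vD; rewrite -[v]opprK DB // -sub0r DB.
rewrite -sum1_card (partition_big_imset f) /= mulnC -sum_nat_const.
apply: eq_bigr => _ /imsetP[x0 x0D ->].
rewrite -(card_imset _ (addIr x0)) -sum1_card; apply: eq_bigl => x.
apply/andP/imsetP => [[xD /eqP fx] | [z /[!inE] /andP[zD /eqP fz] ->]].
- by exists (x - x0); rewrite ?subrK // inE DB //= raddfB fx subrr.
- by rewrite DD // raddfD fz add0r.
Qed.

Lemma zmod_closed_ker (U V : finZmodType) (D : {set U}) (h : {additive U -> V}) :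
  GRing.zmod_closed D -> GRing.zmod_closed [set x in D | h x == 0].
Proof.
case=> D0 DB; split=> [|u v]; first by rewrite inE D0 raddf0 /=.
rewrite !inE => /andP[uD /eqP hu] /andP[vD /eqP hv].
by rewrite DB //= raddfB hu hv subrr.
Qed.

Lemma submod_closed_ker (F : finFieldType) (U V : finLmodType F) (D : {set U})
    (h : {linear U -> V}) :
  GRing.submod_closed D -> GRing.submod_closed [set x in D | h x == 0].
Proof.
case=> D0 Dlin; split=> [|a u v]; first by rewrite inE D0 raddf0 /=.
rewrite !inE => /andP[uD /eqP hu] /andP[vD /eqP hv].
by rewrite Dlin //= linearP hu hv scaler0 addr0.
Qed.

Lemma card_imset_kerP (U V W : finZmodType) (D : {set U})
    (f : {additive U -> V}) (h : {additive U -> W}) :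
  GRing.zmod_closed D ->
  #|f @: D| = (#|f @: [set x in D | h x == 0%R]| * #|h @: D|)%N <->
  [set x in D | f x == 0] \subset [set x in D | h x == 0].
Proof.
set D0 := [set x in D | h x == 0] => Dz; have D0z := zmod_closed_ker h Dz.
set K := [set x in D | f x == 0]; set K0 := [set x in D0 | f x == 0].
have K0K : K0 \subset K by apply/subsetP=> x; rewrite !inE => /andP[/andP[-> _] ->].
have KD0 : (K \subset D0) = (K == K0).
  rewrite eqEsubset K0K andbT; apply/subsetP/subsetP => sub x xK.
    by rewrite inE sub //; rewrite inE in xK; case/andP: xK.
  by have := sub x xK; rewrite inE => /andP[].
have img_gt0 : (0 < #|f @: D0| * #|h @: D|)%N.
  by rewrite muln_gt0; apply/andP; split; apply/card_gt0P;
    [exists (f 0) | exists (h 0)]; rewrite imset_f ?D0z.1 ?Dz.1.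
have K0_gt0 : (0 < #|K0|)%N by apply/card_gt0P; exists 0; rewrite inE D0z.1 raddf0 /=.
have cardD : (#|K| * #|f @: D| = #|K0| * (#|f @: D0| * #|h @: D|))%N.
  by rewrite -(card_imset_ker f Dz) (card_imset_ker h Dz) (card_imset_ker f D0z) mulnA.
rewrite KD0; split=> [imf | /eqP KK0].
- move/eqP: cardD; rewrite imf eqn_pmul2r // => /eqP cardK.
  by rewrite eq_sym eqEcard K0K cardK /=.
- by apply/eqP; rewrite -(eqn_pmul2l K0_gt0) -cardD KK0.
Qed.

Lemma submod_closed_imset (F : finFieldType) (U V : finLmodType F) (S : {set U})
    (f : {linear U -> V}) :
  GRing.submod_closed S -> GRing.submod_closed (f @: S).
Proof.
case=> S0 Slin; split=> [|a _ _ /imsetP[u uS ->] /imsetP[v vS ->]].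
  by rewrite -(raddf0 f) imset_f.
by rewrite -linearP imset_f ?Slin.
Qed.

Lemma card_submod_closed (F : finFieldType) N (S : {set 'rV[F]_N}) :
  GRing.submod_closed S -> #|S| = (#|F| ^ dimS S)%N.
Proof.
case=> S0 Slin; rewrite /dimS -card_vspace; apply: eq_card => x.
apply/idP/idP => [xS | /(coord_span (X := in_tuple (enum S))) ->].
  by apply: memv_span; rewrite mem_enum.
apply: (big_ind (fun v => v \in S)) => // [u v uS vS | i _].
  by rewrite -[u]scale1r Slin.
by rewrite -[_ *: _]addr0 Slin // -mem_enum mem_nth.
Qed.

Lemma dimS_eq_subsetP (F : finFieldType) N (S1 S2 : {set 'rV[F]_N}) :
  GRing.submod_closed S1 -> GRing.submod_closed S2 -> S2 \subset S1 ->
  dimS S1 = dimS S2 <-> S1 \subset S2.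
Proof.
move=> S1s S2s S21; split=> [dimE | S12].
  by rewrite -(eqP (_ : S2 == S1)) // eqEcard S21 !card_submod_closed // dimE /=.
by rewrite (_ : S1 = S2) //; apply/eqP; rewrite eqEsubset S12.
Qed.

Lemma big_pairE (R : Type) (idx : R) (op : Monoid.com_law idx) (T1 T2 : finType)
    (K : T1 * T2 -> R) :
  \big[op/idx]_p K p = \big[op/idx]_x \big[op/idx]_y K (x, y).
Proof. by rewrite pair_bigA; apply: eq_bigr => -[]. Qed.

Section WeightedTrace.
Variable W : finType.
Implicit Types (N : W * W -> nat) (rho : W -> W -> algC) (u v : W).

Definition weighted_trace N rho : algC := \sum_p rho p.1 p.2 * (N p)%:R.

Definition basis_vec u (x : W) : algC := (x == u)%:R.

Definition rank_one (r : algC) (w : W -> algC) (x y : W) : algC := r * w x * w y.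

Lemma weighted_traceE N rho :
  weighted_trace N rho = \sum_x \sum_y rho x y * (N (x, y))%:R.
Proof. by rewrite /weighted_trace big_pairE. Qed.

Lemma sum_basis_vec u (f : W -> algC) : \sum_x basis_vec u x * f x = f u.
Proof.
rewrite (bigD1 u) //= /basis_vec eqxx mul1r big1 ?addr0 // => x /negbTE ->.
by rewrite mul0r.
Qed.

Lemma sum_basis_vec2 u v (f : W -> algC) :
  \sum_x (basis_vec u x + basis_vec v x) * f x = f u + f v.
Proof. by rewrite -!sum_basis_vec -big_split; apply: eq_bigr => x _; rewrite mulrDl. Qed.

Lemma rank_one_is_state r (w : W -> algC) : 0 <= r -> (forall x, (w x)^* = w x) ->
  r * \sum_x w x * w x = 1 -> is_state (rank_one r w).
Proof.
move=> r_ge0 w_real tr1; split=> [v|]; last first.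
  by rewrite -tr1 mulr_sumr; apply: eq_bigr => x _; rewrite /rank_one mulrA.
have -> : \sum_x \sum_y (v x)^* * rank_one r w x y * v y =
          r * ((\sum_y w y * v y)^* * (\sum_y w y * v y)).
  rewrite rmorph_sum big_distrlr mulr_sumr; apply: eq_bigr => x _.
  rewrite mulr_sumr; apply: eq_bigr => y _.
  by rewrite rmorphM /= w_real /rank_one; ring.
by rewrite mulr_ge0 // mulrC mul_conjC_ge0.
Qed.

Lemma weighted_trace_rank_one N r w :
  weighted_trace N (rank_one r w) = r * \sum_x w x * \sum_y w y * (N (x, y))%:R.
Proof.
rewrite weighted_traceE mulr_sumr; apply: eq_bigr => x _; rewrite !mulr_sumr.
by apply: eq_bigr => y _; rewrite /rank_one; ring.
Qed.

Lemma weighted_trace_diag N rho : (forall u v, u != v -> N (u, v) = 0%N) ->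
  weighted_trace N rho = \sum_x rho x x * (N (x, x))%:R.
Proof.
move=> N_off; rewrite weighted_traceE; apply: eq_bigr => x _.
by rewrite (bigD1 x) //= big1 ?addr0 // => y yx; rewrite N_off ?mulr0 // eq_sym.
Qed.

Definition basis_state u := rank_one 1 (basis_vec u).

Definition sum_state u v := rank_one 2^-1 (fun x => basis_vec u x + basis_vec v x).

Lemma basis_state_is_state u : is_state (basis_state u).
Proof.
apply: rank_one_is_state => // [x|]; first by rewrite /basis_vec conjC_nat.
by rewrite sum_basis_vec /basis_vec eqxx mulr1n mul1r.
Qed.

Lemma sum_state_is_state u v : u != v -> is_state (sum_state u v).
Proof.
move=> uv; apply: rank_one_is_state => [|x|]; first by rewrite invr_ge0 ler0n.
  by rewrite rmorphD /= /basis_vec !conjC_nat.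
rewrite sum_basis_vec2 /basis_vec !eqxx (negbTE uv) eq_sym (negbTE uv).
by rewrite addr0 add0r mulVf // pnatr_eq0.
Qed.

Lemma weighted_trace_basis_state N u : weighted_trace N (basis_state u) = (N (u, u))%:R.
Proof. by rewrite weighted_trace_rank_one mul1r !sum_basis_vec. Qed.

Lemma weighted_trace_sum_state N u v : weighted_trace N (sum_state u v) =
  2^-1 * ((N (u, u) + N (u, v)) + (N (v, u) + N (v, v)))%:R.
Proof. by rewrite weighted_trace_rank_one !sum_basis_vec2 !natrD. Qed.

Lemma weighted_trace_constP N :
  (forall rho1 rho2, is_state rho1 -> is_state rho2 ->
     weighted_trace N rho1 = weighted_trace N rho2) <->
  (forall u v, u != v -> N (u, v) = 0%N) /\ (forall u v, N (u, u) = N (v, v)).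
Proof.
split=> [Nconst | [N_off N_diag] rho1 rho2 [_ tr1] [_ tr2]].
- have N_diag u v : N (u, u) = N (v, v).
    apply/eqP; rewrite -(eqr_nat algC) -!weighted_trace_basis_state.
    by rewrite (Nconst _ _ (basis_state_is_state u) (basis_state_is_state v)).
  split=> // u v uv.
  (* On [sum_state u v] the two off-diagonal weights add up to 0, and they are naturals. *)
  have := Nconst _ _ (sum_state_is_state uv) (basis_state_is_state u).
  rewrite weighted_trace_sum_state weighted_trace_basis_state => /(congr1 ( *%R 2)).
  rewrite mulrA mulfV ?pnatr_eq0 // mul1r -natrM => /eqP; rewrite eqr_nat (N_diag v u).
  by lia.
- case: (pickP W) => [w0 _ | W0]; last by rewrite !weighted_trace_diag // !big_pred0.
  have trace_weight rho : \sum_x rho x x = 1 -> weighted_trace N rho = (N (w0, w0))%:R.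
    move=> tr; rewrite weighted_trace_diag // -[RHS]mul1r -tr mulr_suml.
    by apply: eq_bigr => x _; rewrite (N_diag x w0).
  by rewrite !trace_weight.
Qed.
End WeightedTrace.

(* Pairs (secret, word); the alias carries the finite lmodType structure that is not
   inferred for the bare product. *)
Definition secret_word (F : finFieldType) (L n : nat) := ('rV[F]_L * 'rV[F]_n)%type.
HB.instance Definition _ F L n := GRing.Lmodule.on (secret_word F L n).
HB.instance Definition _ F L n := Finite.on (secret_word F L n).

Section Scheme.
Variables (F : finFieldType) (n L : nat) (C2 : {vspace 'rV[F]_n}).
Variables (g : 'rV[F]_L -> 'rV[F]_n) (I : {set 'I_L}) (J : {set 'I_n}).
Hypothesis g_linear : linear g.

HB.instance Definition _ := GRing.isLinear.Build F _ _ _ g g_linear.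

Lemma mem_cosetS s x : (x \in cosetS C2 g s) = (x - g s \in C2).
Proof. by rewrite inE. Qed.

Lemma cosetS_linear a s t x y : x \in cosetS C2 g s -> y \in cosetS C2 g t ->
  a *: x + y \in cosetS C2 g (a *: s + t).
Proof.
rewrite !mem_cosetS linearP => xs yt.
by rewrite opprD addrACA -scalerBr rpredD ?rpredZ.
Qed.

Lemma cosetS0 : (0 : 'rV_n) \in cosetS C2 g 0.
Proof. by rewrite mem_cosetS raddf0 subrr mem0v. Qed.

Lemma cosetS_self s : g s \in cosetS C2 g s.
Proof. by rewrite mem_cosetS subrr mem0v. Qed.

Lemma cosetSD s t x y : x \in cosetS C2 g s -> y \in cosetS C2 g t ->
  x + y \in cosetS C2 g (s + t).
Proof. by move=> xs yt; have := cosetS_linear 1 xs yt; rewrite !scale1r. Qed.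

Lemma cosetSB s t x y : x \in cosetS C2 g s -> y \in cosetS C2 g t ->
  x - y \in cosetS C2 g (s - t).
Proof.
move=> xs yt; have := cosetS_linear (-1) yt xs.
by rewrite !scaleN1r ![- _ + _]addrC.
Qed.

Definition codewords : {set secret_word F L n} := [set p | p.2 \in cosetS C2 g p.1].

Lemma mem_codewords s x : ((s, x) \in codewords) = (x \in cosetS C2 g s).
Proof. by rewrite !inE. Qed.

Lemma codewords_submod : GRing.submod_closed codewords.
Proof.
split=> [|a p q]; first by rewrite inE cosetS0.
by rewrite !inE /= -!mem_cosetS; apply: cosetS_linear.
Qed.

Definition J_hides_I := forall u : 'rV[F]_#|I|,
  exists s x, [/\ x \in cosetS C2 g s, projK J x = 0 & projK I s = u].

Definition Jbar_determines_secret := forall s x, x \in cosetS C2 g s ->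
  projK (~: J) x = 0 -> projK (~: I) s = 0 -> s = 0.

Local Notation quad := (('rV[F]_n * 'rV[F]_n) * ('rV[F]_L * 'rV[F]_L))%type.

(* [q = ((x, y), (s, t))] indexes the entry [<x| E|s> rho(s, t) <t|E^dagger|y>] of the
   encoded state that contributes to the entry [(a, b)] of its partial trace. *)
Definition ptrace_term (a b : 'rV[F]_#|J|) (q : quad) : bool :=
  [&& projK J q.1.1 == a, projK J q.1.2 == b,
      projK (~: J) q.1.2 == projK (~: J) q.1.1,
      q.1.1 \in cosetS C2 g q.2.1, q.1.2 \in cosetS C2 g q.2.2 &
      projK (~: I) q.2.1 == projK (~: I) q.2.2].

Definition secret_I_pair (q : quad) := (projK I q.2.1, projK I q.2.2).

Definition ptrace_weight a b (uv : 'rV[F]_#|I| * 'rV[F]_#|I|) : nat :=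
  #|[set q | ptrace_term a b q & secret_I_pair q == uv]|.

Definition encode_scale : algC :=
  let c := (sqrtC #|[set y : 'rV[F]_n | y \in C2]|%:R)^-1 in
  c * c^* * ((#|F|%:R) ^+ #|~: I|)^-1.

Lemma encode_scale_neq0 : encode_scale != 0.
Proof.
have C2_gt0 : (0 < #|[set y : 'rV[F]_n | y \in C2]|)%N.
  by apply/card_gt0P; exists 0; rewrite inE mem0v.
rewrite !mulf_neq0 ?conjC_eq0 ?invr_eq0 ?sqrtC_eq0 ?expf_neq0 ?pnatr_eq0 -?lt0n //.
by apply/card_gt0P; exists 0.
Qed.

Lemma encode_secret_entry rho x y s t :
  enc_amp C2 g x s * secret_state rho s t * (enc_amp C2 g y t)^* =
  (if [&& x \in cosetS C2 g s, y \in cosetS C2 g t &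
          projK (~: I) s == projK (~: I) t] then encode_scale else 0) *
  rho (projK I s) (projK I t).
Proof.
rewrite /enc_amp /secret_state /encode_scale.
case: (x \in cosetS C2 g s); case: (y \in cosetS C2 g t);
  case: (projK (~: I) s == projK (~: I) t); rewrite /= ?conjC0 ?mulr0 ?mul0r //; ring.
Qed.

Lemma ptrace_encode_secret_sum rho a b :
  ptrace (J := J) (encode C2 g (secret_state (I := I) rho)) a b =
  \sum_(q : quad) (if ptrace_term a b q then encode_scale else 0) *
                  rho (secret_I_pair q).1 (secret_I_pair q).2.
Proof.
rewrite !big_pairE /ptrace /encode big_mkcond; apply: eq_bigr => x _ /=.
case: ifP => xa; last by rewrite big1 // => y _; rewrite big1 // => st _;
  rewrite /ptrace_term /= xa mul0r.
rewrite big_mkcond; apply: eq_bigr => y _; case: ifP => yb.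
  by rewrite big_pairE; apply: eq_bigr => s _; apply: eq_bigr => t _;
    rewrite encode_secret_entry /ptrace_term /= xa; case/andP: yb => -> ->.
rewrite big1 // => st _.
by rewrite /ptrace_term /= xa; move/negbT: yb; rewrite negb_and => /orP[]/negbTE->;
  rewrite ?andbF mul0r.
Qed.

Lemma ptrace_encode_secret rho a b :
  ptrace (J := J) (encode C2 g (secret_state (I := I) rho)) a b =
  encode_scale * weighted_trace (ptrace_weight a b) rho.
Proof.
rewrite ptrace_encode_secret_sum (partition_big secret_I_pair predT) //.
rewrite /weighted_trace mulr_sumr; apply: eq_bigr => uv _.
rewrite (eq_bigr (fun q => rho uv.1 uv.2 * (if ptrace_term a b q then encode_scale else 0)));
  last by move=> q /eqP <-; rewrite mulrC.
rewrite -mulr_sumr -big_mkcondr /= (eq_bigl [in [set q | ptrace_term a b q &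
  secret_I_pair q == uv]]); last by move=> q; rewrite inE andbC.
by rewrite sumr_const mulrCA mulr_natr.
Qed.

Lemma ptrace_weight_offdiagP : Jbar_determines_secret <->
  forall a b u v, u != v -> ptrace_weight a b (u, v) = 0%N.
Proof.
split=> [det a b u v uv | Noff s x xs xJ sI].
  apply/eqP; rewrite cards_eq0; apply/eqP/setP => -[[x y] [s t]]; rewrite !inE /ptrace_term /=.
  apply/negbTE/negP => /andP[/and5P[_ _ /eqP yJ xs /andP[yt /eqP sI]] /eqP[su tv]].
  have /eqP : s - t = 0 by apply: det (cosetSB xs yt) _ _; rewrite raddfB /= ?yJ ?sI subrr.
  by rewrite subr_eq0 => /eqP st; move: uv; rewrite -su -tv st eqxx.
case: (eqVneq s 0) => // s_neq0.
have sI_neq0 : projK I s != 0.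
  by apply: contra s_neq0 => /eqP sI0; rewrite (projK_setC_eq0 sI0 sI).
move: (Noff (projK J x) 0 _ _ sI_neq0) => /eqP.
rewrite cards_eq0 => /eqP/setP/(_ ((x, 0), (s, 0))).
by rewrite !inE /ptrace_term /secret_I_pair /= !raddf0 xJ sI xs cosetS0 !eqxx.
Qed.

Lemma ptrace_weight_diag_le a b u v : J_hides_I ->
  (ptrace_weight a b (u, u) <= ptrace_weight a b (v, v))%N.
Proof.
move=> hides; have [s0 [x0 [x0s0 x0J s0I]]] := hides (v - u).
rewrite /ptrace_weight -(card_imset _ (addIr ((x0, x0), (s0, s0)))).
apply/subset_leq_card/subsetP => q /imsetP[[[x y] [s t]]].
rewrite !inE /ptrace_term /secret_I_pair /=.
move=> /andP[/and5P[/eqP xa /eqP yb /eqP yJ xs /andP[yt /eqP sI]] /eqP[su tu]] ->.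
rewrite inE -mem_cosetS /ptrace_term /secret_I_pair /= !cosetSD // !(raddfD (projK _)).
by rewrite /= xa yb yJ sI su tu x0J s0I !addr0 (addrC u) subrK !eqxx.
Qed.

Lemma ptrace_weight_diagP : J_hides_I <->
  forall a b u v, ptrace_weight a b (u, u) = ptrace_weight a b (v, v).
Proof.
split=> [hides a b u v | Ndiag u].
  by apply/eqP; rewrite eqn_leq !ptrace_weight_diag_le.
have : (0 < ptrace_weight 0 0 (u, u))%N.
  rewrite (Ndiag 0 0 u 0) card_gt0; apply/set0Pn; exists ((0, 0), (0, 0)).
  by rewrite !inE /ptrace_term /secret_I_pair /= !raddf0 cosetS0 !eqxx.
rewrite card_gt0 => /set0Pn[[[x y] [s t]]].
by rewrite !inE => /andP[/and5P[/eqP xJ _ _ xs _] /eqP[sI _]]; exists s, x.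
Qed.

Lemma strongly_secureP :
  strongly_secure C2 g I J <-> J_hides_I /\ Jbar_determines_secret.
Proof.
rewrite ptrace_weight_diagP ptrace_weight_offdiagP.
split=> [secure | [Ndiag Noff] rho1 rho2 rho1_state rho2_state a b].
  have const a b : (forall u v, u != v -> ptrace_weight a b (u, v) = 0%N) /\
                   (forall u v, ptrace_weight a b (u, u) = ptrace_weight a b (v, v)).
    apply/weighted_trace_constP => rho1 rho2 rho1_state rho2_state.
    by apply: (mulfI encode_scale_neq0); rewrite -!ptrace_encode_secret; exact: secure.
  by split=> a b; [exact: (const a b).2 | exact: (const a b).1].
rewrite !ptrace_encode_secret; congr (_ * _).
exact: (weighted_trace_constP _).2 (conj (Noff a b) (Ndiag a b)) _ _ rho1_state rho2_state.
Qed.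

Definition extend_codeword (p : secret_word F L n) : 'rV[F]_(n + #|~: I|) :=
  row_mx p.2 (projK (~: I) p.1).

Lemma extend_codeword_is_linear : linear extend_codeword.
Proof. by move=> a p q; rewrite /extend_codeword /= linearP scale_row_mx add_row_mx. Qed.

HB.instance Definition _ :=
  GRing.isLinear.Build F _ _ _ extend_codeword extend_codeword_is_linear.

Definition secret_part_I (p : secret_word F L n) : 'rV[F]_#|I| := projK I p.1.

Lemma secret_part_I_is_linear : linear secret_part_I.
Proof. by move=> a p q; rewrite /secret_part_I /= linearP. Qed.

HB.instance Definition _ :=
  GRing.isLinear.Build F _ _ _ secret_part_I secret_part_I_is_linear.

Definition codewords_I0 := [set p in codewords | secret_part_I p == 0].

Lemma codewords_I0_submod : GRing.submod_closed codewords_I0.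
Proof. exact: submod_closed_ker codewords_submod. Qed.

Lemma mem_codewords_I0 s x :
  ((s, x) \in codewords_I0) = (x \in cosetS C2 g s) && (projK I s == 0).
Proof. by rewrite inE mem_codewords. Qed.

Lemma C1'_imset : C1' C2 g I = extend_codeword @: codewords.
Proof.
apply/setP => z; apply/imset2P/imsetP => [[s x _ xs ->] | [[s x] /[!mem_codewords] xs ->]].
  by exists (s, x); rewrite ?mem_codewords.
by exists s x; rewrite ?in_setT.
Qed.

Lemma C2'_imset : C2' C2 g I = extend_codeword @: codewords_I0.
Proof.
apply/setP => z; apply/imset2P/imsetP => [[s x] | [[s x]]].
  by rewrite inE => sI xs ->; exists (s, x); rewrite // mem_codewords_I0 xs.
by rewrite mem_codewords_I0 => /andP[xs sI] ->; exists s x => //; rewrite inE.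
Qed.

Local Notation Jc := (Jcoords #|~: I| J).
Local Notation Jb := (Jbar_ext_coords #|~: I| J).

Lemma J_hides_I_imsetP :
  (projK Jc \o extend_codeword) @: codewords \subset
  (projK Jc \o extend_codeword) @: codewords_I0 <-> J_hides_I.
Proof.
split=> [sub u | hides].
  have [s sI] := projK_surj u.
  have /imsetP[[s' x']] : (projK Jc \o extend_codeword) (s, g s) \in
      (projK Jc \o extend_codeword) @: codewords_I0.
    by apply: (subsetP sub); rewrite imset_f // mem_codewords cosetS_self.
  rewrite mem_codewords_I0 /= => /andP[x's' /eqP s'I] /projK_Jcoords_eqP xJ.
  exists (s - s'), (g s - x'); split; first exact: cosetSB (cosetS_self s) x's'.
    by rewrite raddfB /= xJ subrr.
  by rewrite raddfB /= sI s'I subr0.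
apply/subsetP => _ /imsetP[[s x] /[!mem_codewords] xs ->].
have [s0 [x0 [x0s0 x0J s0I]]] := hides (projK I s).
apply/imsetP; exists (s - s0, x - x0).
  by rewrite mem_codewords_I0 cosetSB // raddfB /= s0I subrr eqxx.
by apply/projK_Jcoords_eqP; rewrite raddfB /= x0J subr0.
Qed.

Lemma dim_J_condP :
  (dimS (projS Jc (C1' C2 g I)))%:Z - (dimS (projS Jc (C2' C2 g I)))%:Z = 0 <->
  J_hides_I.
Proof.
rewrite C1'_imset C2'_imset /projS -!imset_comp -J_hides_I_imsetP.
have codim_eq0 (d1 d2 : nat) : d1%:Z - d2%:Z = 0 <-> d1 = d2.
  by split=> [/eqP | ->]; rewrite ?subrr // subr_eq0 => /eqP[].
rewrite codim_eq0; apply: dimS_eq_subsetP.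
- exact: (submod_closed_imset (projK Jc \o extend_codeword) codewords_submod).
- exact: (submod_closed_imset (projK Jc \o extend_codeword) codewords_I0_submod).
- by apply: imsetS; apply/subsetP=> p /[!inE] /andP[].
Qed.

Lemma Jbar_determines_secret_kerP :
  [set p in codewords | (projK Jb \o extend_codeword) p == 0] \subset codewords_I0 <->
  Jbar_determines_secret.
Proof.
split=> [sub s x xs xJ sI | det].
  have : (s, x) \in codewords_I0.
    apply: (subsetP sub); rewrite inE mem_codewords xs /=.
    exact/eqP/projK_Jbar_ext_coords_eq0P.
  by rewrite mem_codewords_I0 => /andP[_ /eqP sI0]; apply: projK_setC_eq0 sI0 sI.
apply/subsetP => -[s x]; rewrite inE mem_codewords mem_codewords_I0 /=.
by case/andP=> xs /eqP/projK_Jbar_ext_coords_eq0P[xJ sI]; rewrite xs (det s x) ?raddf0 ?eqxx.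
Qed.

Lemma card_secret_I_pair : #|secret_part_I @: codewords| = (#|F| ^ #|I|)%N.
Proof.
rewrite -[in RHS](mul1n #|I|) -card_mx -cardsT; apply: eq_card => u.
rewrite in_setT; have [s sI] := projK_surj u.
by apply/imsetP; exists (s, g s); rewrite ?mem_codewords ?cosetS_self.
Qed.

Lemma dim_Jbar_condP :
  (dimS (projS Jb (C1' C2 g I)))%:Z - (dimS (projS Jb (C2' C2 g I)))%:Z = #|I|%:Z <->
  Jbar_determines_secret.
Proof.
rewrite C1'_imset C2'_imset /projS -!imset_comp -Jbar_determines_secret_kerP.
rewrite -(card_imset_kerP _ secret_part_I (GRing.submod_closedB codewords_submod)) -/codewords_I0.
have imset_submod (D : {set secret_word F L n}) : GRing.submod_closed D ->
    GRing.submod_closed ((projK Jb \o extend_codeword) @: D).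
  exact: (submod_closed_imset (projK Jb \o extend_codeword)).
rewrite card_secret_I_pair !card_submod_closed -?expnD.
- split=> [/eqP | /eqP]; first by rewrite subr_eq -PoszD eqz_nat => /eqP->; rewrite addnC.
  by rewrite eqn_exp2l ?finNzRing_gt1 // => /eqP->; rewrite PoszD addrAC subrr add0r.
- exact: imset_submod codewords_I0_submod.
- exact: imset_submod codewords_submod.
Qed.
End Scheme.

Theorem proposition1 (F : finFieldType) (n L : nat)
  (C1 C2 : {vspace 'rV[F]_n}) (g : 'rV[F]_L -> 'rV[F]_n)
  (I : {set 'I_L}) (J : {set 'I_n}) :
  (C2 <= C1)%VS -> C2 != C1 -> (\dim C1 - \dim C2)%N = L ->
  is_quotient_iso C1 C2 g ->
  strongly_secure C2 g I J <->
  ((dimS (projS (Jcoords #|~: I| J) (C1' C2 g I)))%:Z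
     - (dimS (projS (Jcoords #|~: I| J) (C2' C2 g I)))%:Z = 0
   /\ (dimS (projS (Jbar_ext_coords #|~: I| J) (C1' C2 g I)))%:Z
     - (dimS (projS (Jbar_ext_coords #|~: I| J) (C2' C2 g I)))%:Z = #|I|%:Z).
Proof.
move=> _ _ _ [g_linear _ _].
by rewrite (strongly_secureP C2 I J g_linear) (dim_J_condP C2 I J g_linear)
  (dim_Jbar_condP C2 I J g_linear).
Qed.
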